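(* For the CRF surrogate with decoding $d$ described in the context, the calibration function satisfies, for all $\varepsilon\ge0$, $$\zeta(\varepsilon)\ge\frac{\varepsilon^2}{8\,c_{\psi}^2\,c_{\phi}^2},\qquad c_\psi=\max_{z\in\mathcal{Z}}\|\psi(z)\|_2,\quad c_\phi=\max_{y\in\mathcal{Y}}\|\phi(y)\|_2 .$$
   Context: $\mathcal{Y},\mathcal{Z}$ finite sets, $\mathcal{H}$ a finite-dimensional real Euclidean space, $\psi:\mathcal{Z}\to\mathcal{H}$, $\phi:\mathcal{Y}\to\mathcal{H}$, $c\in\mathbb{R}$, $L(z,y)=\langle\psi(z),\phi(y)\rangle+c$. For $q\in\operatorname{Prob}(\mathcal{Y})$: $\mu(q)=\sum_y q(y)\phi(y)$, $\ell(z,q)=\mathbb{E}_{Y\sim q}L(z,Y)$, $\delta\ell(z,q)=\ell(z,q)-\min_{z'}\ell(z',q)$. The CRF surrogate is $S(v,y)=\log\sum_{y'\in\mathcal{Y}}\exp\langle v,\phi(y')\rangle-\langle v,\phi(y)\rangle$ for $v\in\mathcal{V}=\mathcal{H}$; $s(v,q)=\mathbb{E}_{Y\sim q}S(v,Y)$, $\delta s(v,q)=s(v,q)-\inf_{v'}s(v',q)$. For $v\in\mathcal{H}$ let $p_v(y)=\exp\langle\phi(y),v\rangle/\sum_{y'}\exp\langle\phi(y'),v\rangle$ and $m(v)=\sum_y p_v(y)\phi(y)$ (the marginals). The decoding is $d(v)$ = an element of $\arg\min_{z\in\mathcal{Z}}\langle\psi(z),m(v)\rangle$ (fixed tie-breaking).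 The calibration function is $\zeta(\varepsilon)=\inf\{\delta s(v,q):v\in\mathcal{H},q\in\operatorname{Prob}(\mathcal{Y}),\delta\ell(d(v),q)\ge\varepsilon\}$ ($\inf\emptyset=+\infty$). *)

From Stdlib Require Import Reals List Classical ClassicalEpsilon.
Open Scope R_scope.

(* Finite sets are represented by a type together with a duplicate-free
   list enumerating all of its elements (hypotheses stated in the theorem). *)

Definition lsum {A : Type} (l : list A) (f : A -> R) : R :=
  fold_right (fun a acc => f a + acc) 0 l.

Definition lmin {A : Type} (l : list A) (f : A -> R) : R :=
  match l with
  | nil => 0
  | a :: l' => fold_right (fun b acc => Rmin (f b) acc) (f a) l'
  end.

Definition lmax {A : Type} (l : list A) (f : A -> R) : R :=
  match l with
  | nil => 0
  | a :: l' => fold_right (fun b acc => Rmax (f b) acc) (f a) l'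
  end.

(* The Euclidean space H = R^n; vectors are functions nat -> R of which
   only the coordinates 0..n-1 matter. *)
Definition vec := nat -> R.

Definition inner (n : nat) (x y : vec) : R :=
  lsum (seq 0 n) (fun i => x i * y i).

Definition norm2 (n : nat) (x : vec) : R := sqrt (inner n x x).

Definition is_prob {Y : Type} (ys : list Y) (q : Y -> R) : Prop :=
  (forall y, 0 <= q y) /\ lsum ys q = 1.

Definition is_glb (P : R -> Prop) (m : R) : Prop :=
  (forall x, P x -> m <= x) /\ (forall b, (forall x, P x -> b <= x) -> b <= m).

Definition Rinf (P : R -> Prop) : R :=
  match excluded_middle_informative (exists m, is_glb P m) with
  | left h => proj1_sig (constructive_indefinite_description _ h)
  | right _ => 0
  end.

Section CRF.
Context {Y Z : Type} (ys : list Y) (zs : list Z) (n : nat)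
        (psi : Z -> vec) (phi : Y -> vec) (c : R).

Definition Lloss (z : Z) (y : Y) : R := inner n (psi z) (phi y) + c.

Definition mu (q : Y -> R) : vec := fun i => lsum ys (fun y => q y * phi y i).

Definition ell (z : Z) (q : Y -> R) : R := lsum ys (fun y => q y * Lloss z y).

Definition delta_ell (z : Z) (q : Y -> R) : R :=
  ell z q - lmin zs (fun z' => ell z' q).

Definition Ssur (v : vec) (y : Y) : R :=
  ln (lsum ys (fun y' => exp (inner n v (phi y')))) - inner n v (phi y).

Definition ssur (v : vec) (q : Y -> R) : R := lsum ys (fun y => q y * Ssur v y).

Definition delta_s (v : vec) (q : Y -> R) : R :=
  ssur v q - Rinf (fun r => exists v' : vec, r = ssur v' q).

Definition pv (v : vec) (y : Y) : R :=
  exp (inner n (phi y) v) / lsum ys (fun y' => exp (inner n (phi y') v)).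

Definition marg (v : vec) : vec := fun i => lsum ys (fun y => pv v y * phi y i).

Definition is_decoding (d : vec -> Z) : Prop :=
  forall v : vec, In (d v) zs /\
    forall z, In z zs -> inner n (psi (d v)) (marg v) <= inner n (psi z) (marg v).

(* the set whose infimum is the calibration function zeta(eps) *)
Definition calib_set (d : vec -> Z) (eps : R) (r : R) : Prop :=
  exists (v : vec) (q : Y -> R),
    is_prob ys q /\ delta_ell (d v) q >= eps /\ r = delta_s v q.

Definition c_psi : R := lmax zs (fun z => norm2 n (psi z)).
Definition c_phi : R := lmax ys (fun y => norm2 n (phi y)).

(* zeta(eps) >= b, with inf of the empty set = +infinity *)
Definition zeta_ge (d : vec -> Z) (eps b : R) : Prop :=
  forall r, calib_set d eps r -> b <= r.

End CRF.

From Stdlib Require Import Reals List Lra ClassicalEpsilon.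
From Coquelicot Require Import Coquelicot.
Open Scope R_scope.

(* Let A(v) = ln sum_y exp <v, phi y> be the log-partition function; for a
   probability q the expected surrogate is s(v,q) = A(v) - <v, mu(q)>, the
   expected task loss is ell(z,q) = <psi z, mu(q)> + c, and the gradient of A
   is the vector of marginals m(v).  Put delta = m(v) - mu(q), N = |delta|.
   1. Loss side: d(v) minimises <psi z, m(v)>, so its excess loss is at most
      <psi(d v) - psi z0, mu(q) - m(v)> <= 2 c_psi N (Cauchy-Schwarz).
   2. Surrogate side: A is c_phi^2-smooth, i.e. along a direction delta,
      A(v - t delta) <= A(v) - t <delta, m(v)> + c_phi^2 |delta|^2 t^2 / 2.
      This reduces to the one-dimensional function t |-> ln sum_y w_y e^{t x_y},
      whose second derivative is a variance bounded by max |x_y|^2, and is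
      proved by the mean value theorem.  Comparing s(v,q) with
      s(v - t delta, q) gives delta_s(v,q) >= t N^2 - c_phi^2 N^2 t^2 / 2.
   3. Taking t = 1 / c_phi^2 and eps <= 2 c_psi N yields the bound
      delta_s >= eps^2 / (8 c_psi^2 c_phi^2). *)

Lemma lsum_ext {A : Type} (l : list A) (f g : A -> R) :
  (forall a, f a = g a) -> lsum l f = lsum l g.
Proof. intros H; induction l; simpl; auto. rewrite H, IHl; auto. Qed.

Lemma lsum_plus {A : Type} (l : list A) (f g : A -> R) :
  lsum l (fun a => f a + g a) = lsum l f + lsum l g.
Proof. induction l; simpl; [ring|]. rewrite IHl; ring. Qed.

Lemma lsum_minus {A : Type} (l : list A) (f g : A -> R) :
  lsum l (fun a => f a - g a) = lsum l f - lsum l g.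
Proof. induction l; simpl; [ring|]. rewrite IHl; ring. Qed.

Lemma lsum_scal {A : Type} (l : list A) (f : A -> R) k :
  lsum l (fun a => k * f a) = k * lsum l f.
Proof. induction l; simpl; [ring|]. rewrite IHl; ring. Qed.

Lemma lsum_scal_r {A : Type} (l : list A) (f : A -> R) k :
  lsum l (fun a => f a * k) = lsum l f * k.
Proof. induction l; simpl; [ring|]. rewrite IHl; ring. Qed.

Lemma lsum_comm {A B : Type} (l1 : list A) (l2 : list B) (f : A -> B -> R) :
  lsum l1 (fun a => lsum l2 (fun b => f a b)) = lsum l2 (fun b => lsum l1 (fun a => f a b)).
Proof.
  induction l1 as [|a l1 IH]; simpl.
  - induction l2; simpl; auto. rewrite <- IHl2; ring.
  - rewrite IH, <- lsum_plus. auto.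
Qed.

Lemma lsum_prod {A : Type} (l : list A) (f g : A -> R) :
  lsum l f * lsum l g = lsum l (fun a => lsum l (fun b => f a * g b)).
Proof.
  rewrite <- lsum_scal_r. apply lsum_ext; intros a.
  rewrite <- lsum_scal. reflexivity.
Qed.

Lemma lsum_le {A : Type} (l : list A) (f g : A -> R) :
  (forall a, f a <= g a) -> lsum l f <= lsum l g.
Proof. intros H; induction l; simpl; [lra|]. specialize (H a); lra. Qed.

Lemma lsum_nonneg {A : Type} (l : list A) (f : A -> R) :
  (forall a, 0 <= f a) -> 0 <= lsum l f.
Proof. intros H; induction l; simpl; [lra|]. specialize (H a); lra. Qed.

Lemma lsum_pos {A : Type} (l : list A) (f : A -> R) :
  l <> nil -> (forall a, 0 < f a) -> 0 < lsum l f.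
Proof.
  intros Hl H; destruct l as [|a l]; [congruence|]; simpl.
  assert (0 <= lsum l f) by (apply lsum_nonneg; intros; left; auto).
  specialize (H a); lra.
Qed.

Lemma lsum_ge_In {A : Type} (l : list A) (f : A -> R) a :
  In a l -> (forall b, 0 <= f b) -> f a <= lsum l f.
Proof.
  intros Hi H; induction l as [|b l IH]; simpl in *; [tauto|].
  destruct Hi as [->|Hi].
  - assert (0 <= lsum l f) by (apply lsum_nonneg; auto). lra.
  - specialize (IH Hi). specialize (H b). lra.
Qed.

Lemma fold_max_ge {A : Type} (f : A -> R) (l : list A) i :
  i <= fold_right (fun b acc => Rmax (f b) acc) i l /\
  forall a, In a l -> f a <= fold_right (fun b acc => Rmax (f b) acc) i l.
Proof.
  induction l as [|b l [H1 H2]]; simpl; [split; [lra|tauto]|]. split.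
  - eapply Rle_trans; [exact H1|apply Rmax_r].
  - intros a [->|Ha]; [apply Rmax_l|].
    eapply Rle_trans; [apply H2; auto|apply Rmax_r].
Qed.

Lemma lmax_ge {A : Type} (l : list A) (f : A -> R) a : In a l -> f a <= lmax l f.
Proof.
  destruct l as [|b l]; simpl; [tauto|].
  destruct (fold_max_ge f l (f b)) as [H1 H2]. intros [<-|H]; auto.
Qed.

Lemma fold_min_attained {A : Type} (f : A -> R) (l : list A) i :
  fold_right (fun b acc => Rmin (f b) acc) i l = i \/
  exists a, In a l /\ fold_right (fun b acc => Rmin (f b) acc) i l = f a.
Proof.
  induction l as [|b l IH]; simpl; [auto|].
  destruct (Rle_dec (f b) (fold_right (fun b acc => Rmin (f b) acc) i l)) as [h|h].
  - right; exists b; split; auto. apply Rmin_left; auto.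
  - rewrite Rmin_right by lra. destruct IH as [H|[a [Ha H]]]; auto.
    right; exists a; auto.
Qed.

Lemma lmin_attained {A : Type} (l : list A) (f : A -> R) :
  l <> nil -> exists a, In a l /\ lmin l f = f a.
Proof.
  destruct l as [|b l]; [congruence|]; intros _; simpl.
  destruct (fold_min_attained f l (f b)) as [H|[a [Ha H]]]; [exists b|exists a]; auto.
Qed.

(* A set of nonnegative reals has a greatest lower bound, so [Rinf] is a
   genuine lower bound of it. *)
Lemma Rinf_le_nonneg (P : R -> Prop) x :
  (forall r, P r -> 0 <= r) -> P x -> Rinf P <= x.
Proof.
  intros Hnn Hx.
  assert (Hglb : exists m, is_glb P m).
  { destruct (completeness (fun r => P (- r))) as [m [Hub Hlub]].
    - exists 0. intros r Hr. specialize (Hnn _ Hr). lra.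
    - exists (- x). rewrite Ropp_involutive; auto.
    - exists (- m). split.
      + intros r Hr. assert (- r <= m) by (apply Hub; rewrite Ropp_involutive; auto). lra.
      + intros b Hb. assert (m <= - b); [|lra]. apply Hlub.
        intros r Hr. specialize (Hb _ Hr). lra. }
  unfold Rinf. destruct (excluded_middle_informative _) as [h|h]; [|contradiction].
  destruct (constructive_indefinite_description _ h) as [m Hm]; simpl. apply Hm; auto.
Qed.

Lemma inner_sym n x y : inner n x y = inner n y x.
Proof. unfold inner; apply lsum_ext; intros; ring. Qed.

Lemma inner_nonneg n x : 0 <= inner n x x.
Proof. unfold inner; apply lsum_nonneg; intros; nra. Qed.

Lemma inner_sub_l n x y z k :
  inner n (fun i => x i - k * y i) z = inner n x z - k * inner n y z.
Proof. unfold inner. rewrite <- lsum_scal, <- lsum_minus. apply lsum_ext; intros; ring. Qed.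

Lemma inner_sub_r n u x y :
  inner n u (fun i => x i - y i) = inner n u x - inner n u y.
Proof. unfold inner. rewrite <- lsum_minus. apply lsum_ext; intros; ring. Qed.

Lemma norm2_nonneg n x : 0 <= norm2 n x.
Proof. apply sqrt_pos. Qed.

Lemma norm2_sq n x : norm2 n x ^ 2 = inner n x x.
Proof. unfold norm2. rewrite pow2_sqrt; auto using inner_nonneg. Qed.

(* Cauchy-Schwarz, via Lagrange's identity
   sum_i sum_j (u_i d_j - u_j d_i)^2 = 2 (|u|^2 |d|^2 - <u,d>^2). *)
Lemma cauchy_schwarz n u d : inner n u d ^ 2 <= inner n u u * inner n d d.
Proof.
  unfold inner.
  set (I := seq 0 n).
  assert (Hlagrange : 0 <= lsum I (fun i => lsum I (fun j => (u i * d j - u j * d i) ^ 2)))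
    by (apply lsum_nonneg; intros; apply lsum_nonneg; intros; apply pow2_ge_0).
  rewrite (lsum_ext I _ (fun i => lsum I (fun j => u i * u i * (d j * d j))
                               + lsum I (fun j => d i * d i * (u j * u j))
                               - 2 * lsum I (fun j => u i * d i * (u j * d j)))) in Hlagrange.
  2:{ intros i. rewrite <- lsum_scal, <- lsum_plus, <- lsum_minus.
      apply lsum_ext; intros; ring. }
  rewrite lsum_minus, lsum_plus, lsum_scal, <- !lsum_prod in Hlagrange.
  nra.
Qed.

Lemma cauchy_schwarz_abs n u d : Rabs (inner n u d) <= norm2 n u * norm2 n d.
Proof.
  unfold norm2. rewrite <- sqrt_mult by apply inner_nonneg.
  rewrite <- sqrt_Rsqr_abs. apply sqrt_le_1_alt.
  rewrite Rsqr_pow2. apply cauchy_schwarz.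
Qed.

Lemma inner_lmax_bound {A : Type} (l : list A) n (f : A -> vec) u a :
  In a l -> Rabs (inner n (f a) u) <= lmax l (fun b => norm2 n (f b)) * norm2 n u.
Proof.
  intros Ha. eapply Rle_trans; [apply cauchy_schwarz_abs|].
  apply Rmult_le_compat_r; [apply norm2_nonneg|].
  apply (lmax_ge l (fun b => norm2 n (f b))); auto.
Qed.

Lemma is_derive_lsum {A : Type} (l : list A) (f df : A -> R -> R) (t : R) :
  (forall a, is_derive (f a) t (df a t)) ->
  is_derive (fun s => lsum l (fun a => f a s)) t (lsum l (fun a => df a t)).
Proof.
  intros H. induction l as [|a l IH]; simpl.
  - apply (is_derive_const 0 t).
  - apply (is_derive_plus (f a) (fun s => lsum l (fun y => f y s))); auto.
Qed.

Lemma nonincreasing_from_derive (f df : R -> R) (t : R) :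
  0 <= t -> (forall s, is_derive f s (df s)) -> (forall s, 0 <= s <= t -> df s <= 0) ->
  f t <= f 0.
Proof.
  intros Ht Hd Hneg. destruct (Req_dec t 0) as [->|Ht0]; [lra|].
  destruct (MVT_gen f 0 t df) as [s [Hs Heq]].
  - intros; apply Hd.
  - intros s _. apply continuity_pt_filterlim, (ex_derive_continuous f s).
    eexists; apply Hd.
  - rewrite Rmin_left in Hs by lra. rewrite Rmax_right in Hs by lra.
    assert (df s <= 0) by (apply Hneg; lra).
    assert (df s * (t - 0) <= 0) by (apply Rmult_le_0_r; lra). lra.
Qed.

(* One-dimensional smoothness of a log-sum-exp: for positive weights w and
   values x bounded by M, the function t |-> ln sum_y w_y exp(t x_y) has
   derivative the tilted mean of x and second derivative its tilted
   variance, which is at most M^2; hence it lies below its tangent at 0 plus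
   M^2 t^2 / 2. *)
Section LogSumExpSmooth.
Context {A : Type} (l : list A) (w x : A -> R) (M : R).
Hypothesis l_nonempty : l <> nil.
Hypothesis w_pos : forall a, 0 < w a.
Hypothesis x_bounded : forall a, Rabs (x a) <= M.

Let mass t := lsum l (fun a => w a * exp (t * x a)).
Let mom1 t := lsum l (fun a => w a * x a * exp (t * x a)).
Let mom2 t := lsum l (fun a => w a * x a * x a * exp (t * x a)).

Lemma mass_pos t : 0 < mass t.
Proof.
  apply lsum_pos; auto. intros; apply Rmult_lt_0_compat; auto; apply exp_pos.
Qed.

Lemma mass_derive t : is_derive mass t (mom1 t).
Proof.
  apply (is_derive_lsum l (fun a s => w a * exp (s * x a))
                          (fun a s => w a * x a * exp (s * x a))).
  intros a. auto_derive; auto. ring.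
Qed.

Lemma mom1_derive t : is_derive mom1 t (mom2 t).
Proof.
  apply (is_derive_lsum l (fun a s => w a * x a * exp (s * x a))
                          (fun a s => w a * x a * x a * exp (s * x a))).
  intros a. auto_derive; auto. ring.
Qed.

Lemma mom2_le t : mom2 t <= M ^ 2 * mass t.
Proof.
  unfold mom2, mass. rewrite <- lsum_scal. apply lsum_le. intros a.
  assert (x a * x a <= M ^ 2).
  { pose proof (x_bounded a) as Hx. revert Hx.
    unfold Rabs; destruct (Rcase_abs (x a)); intros; nra. }
  assert (0 < w a * exp (t * x a)) by (apply Rmult_lt_0_compat; auto; apply exp_pos).
  nra.
Qed.

(* The tilted mean mom1/mass grows at rate at most M^2 (its derivative is the
   tilted variance). *)
Lemma tilted_mean_growth t : 0 <= t -> mom1 t / mass t <= mom1 0 / mass 0 + M ^ 2 * t.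
Proof.
  intros Ht.
  set (dmean := fun s => (mom2 s * mass s - mom1 s * mom1 s) / mass s ^ 2).
  assert (Hd : forall s, is_derive (fun s => mom1 s / mass s - M ^ 2 * s) s (dmean s - M ^ 2)).
  { intros s. apply (is_derive_minus (fun s => mom1 s / mass s) (fun s => M ^ 2 * s)).
    - apply is_derive_div; [apply mom1_derive|apply mass_derive|].
      apply Rgt_not_eq, mass_pos.
    - auto_derive; auto. ring. }
  assert (Hvar : forall s, dmean s <= M ^ 2).
  { intros s. pose proof (mass_pos s). pose proof (mom2_le s).
    unfold dmean. apply Rle_div_l; [nra|].
    assert (mom2 s * mass s <= M ^ 2 * mass s * mass s) by (apply Rmult_le_compat_r; lra).
    nra. }
  pose proof (nonincreasing_from_derive _ _ t Ht Hd) as H.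
  assert (mom1 t / mass t - M ^ 2 * t <= mom1 0 / mass 0 - M ^ 2 * 0);
    [apply H; intros; specialize (Hvar s); lra | lra].
Qed.

Lemma log_mass_smooth t : 0 <= t ->
  ln (mass t) <= ln (mass 0) + t * (mom1 0 / mass 0) + M ^ 2 * t ^ 2 / 2.
Proof.
  intros Ht.
  set (gap := fun s => ln (mass s) - s * (mom1 0 / mass 0) - M ^ 2 * s ^ 2 / 2).
  assert (Hd : forall s, is_derive gap s (mom1 s / mass s - mom1 0 / mass 0 - M ^ 2 * s)).
  { intros s. pose proof (mass_pos s).
    apply (is_derive_minus (fun s => ln (mass s) - s * (mom1 0 / mass 0))
                           (fun s => M ^ 2 * s ^ 2 / 2)).
    - apply (is_derive_minus (fun s => ln (mass s)) (fun s => s * (mom1 0 / mass 0))).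
      + replace (mom1 s / mass s) with (scal (mom1 s) (/ mass s)) by reflexivity.
        apply (is_derive_comp ln mass); [apply is_derive_ln; auto|apply mass_derive].
      + auto_derive; auto. apply Rmult_1_l.
    - auto_derive; auto. simpl. field. }
  assert (gap t <= gap 0).
  { apply (nonincreasing_from_derive gap _ t Ht Hd).
    intros s Hs. pose proof (tilted_mean_growth s (proj1 Hs)). lra. }
  unfold gap in *. lra.
Qed.

End LogSumExpSmooth.

Section CRF.
Context {Y Z : Type} (ys : list Y) (zs : list Z) (n : nat)
        (psi : Z -> vec) (phi : Y -> vec) (c : R).
Hypothesis ys_full : forall y : Y, In y ys.
Hypothesis ys_nonempty : ys <> nil.

Definition log_partition (v : vec) : R := ln (lsum ys (fun y => exp (inner n v (phi y)))).

Definition moment_gap (v : vec) (q : Y -> R) : vec :=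
  fun i => marg ys n phi v i - mu ys phi q i.

Lemma inner_mu u q : inner n u (mu ys phi q) = lsum ys (fun y => q y * inner n u (phi y)).
Proof.
  unfold inner, mu.
  rewrite (lsum_ext _ _ (fun i => lsum ys (fun y => q y * (u i * phi y i)))).
  2:{ intros i. rewrite <- lsum_scal. apply lsum_ext; intros; ring. }
  rewrite lsum_comm. apply lsum_ext; intros y. apply lsum_scal.
Qed.

Lemma inner_marg u v :
  inner n u (marg ys n phi v) =
  lsum ys (fun y => exp (inner n v (phi y)) * inner n u (phi y))
  / lsum ys (fun y => exp (inner n v (phi y))).
Proof.
  change (marg ys n phi v) with (mu ys phi (pv ys n phi v)).
  rewrite inner_mu. unfold Rdiv. rewrite <- lsum_scal_r. apply lsum_ext; intros y.
  unfold pv. rewrite (inner_sym n (phi y) v).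
  rewrite (lsum_ext ys (fun y' => exp (inner n (phi y') v))
                       (fun y' => exp (inner n v (phi y')))) by (intros; rewrite inner_sym; auto).
  unfold Rdiv. ring.
Qed.

Lemma ell_affine z q : is_prob ys q -> ell ys n psi phi c z q = inner n (psi z) (mu ys phi q) + c.
Proof.
  intros [_ Hsum]. unfold ell, Lloss.
  rewrite (lsum_ext _ _ (fun y => q y * inner n (psi z) (phi y) + c * q y)) by (intros; ring).
  rewrite lsum_plus, lsum_scal, Hsum, inner_mu. ring.
Qed.

Lemma ssur_log_partition v q : is_prob ys q -> ssur ys n phi v q = log_partition v - inner n v (mu ys phi q).
Proof.
  intros [_ Hsum]. unfold ssur, Ssur, log_partition.
  rewrite (lsum_ext _ _ (fun y => ln (lsum ys (fun y' => exp (inner n v (phi y')))) * q y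
                                   - q y * inner n v (phi y))) by (intros; ring).
  rewrite lsum_minus, lsum_scal, Hsum, inner_mu. ring.
Qed.

Lemma Ssur_nonneg v y : 0 <= Ssur ys n phi v y.
Proof.
  unfold Ssur.
  assert (Hterm : exp (inner n v (phi y)) <= lsum ys (fun y' => exp (inner n v (phi y')))).
  { apply (lsum_ge_In ys (fun y' => exp (inner n v (phi y')))); auto.
    intros; left; apply exp_pos. }
  assert (Hln : ln (exp (inner n v (phi y))) <= ln (lsum ys (fun y' => exp (inner n v (phi y'))))).
  { destruct Hterm as [Hlt|Heq]; [left; apply ln_increasing; auto; apply exp_pos|rewrite Heq; lra]. }
  rewrite ln_exp in Hln. lra.
Qed.

(* Comparing with any other point v' bounds the excess surrogate from below;
   the infimum is a true lower bound because the surrogate is nonnegative. *)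
Lemma delta_s_ge_decrease v v' q : is_prob ys q ->
  ssur ys n phi v q - ssur ys n phi v' q <= delta_s ys n phi v q.
Proof.
  intros Hq. unfold delta_s.
  enough (Rinf (fun r => exists v'' : vec, r = ssur ys n phi v'' q) <= ssur ys n phi v' q) by lra.
  apply Rinf_le_nonneg; [|exists v'; auto].
  intros r [v'' ->]. apply lsum_nonneg; intros y.
  apply Rmult_le_pos; [apply Hq|apply Ssur_nonneg].
Qed.

Lemma log_partition_descent v (delta : vec) t : 0 <= t ->
  log_partition (fun i => v i - t * delta i) <=
  log_partition v - t * inner n delta (marg ys n phi v)
  + (c_phi ys n phi * norm2 n delta) ^ 2 * t ^ 2 / 2.
Proof.
  intros Ht.
  set (w := fun y => exp (inner n v (phi y))).
  set (x := fun y => - inner n delta (phi y)).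
  assert (Hx : forall y, Rabs (x y) <= c_phi ys n phi * norm2 n delta).
  { intros y. unfold x. rewrite Rabs_Ropp, inner_sym. apply inner_lmax_bound; auto. }
  pose proof (log_mass_smooth ys w x _ ys_nonempty (fun y => exp_pos _) Hx t Ht) as H.
  cbv beta in H.
  rewrite (lsum_ext ys (fun y => w y * exp (t * x y))
                       (fun y => exp (inner n (fun i => v i - t * delta i) (phi y)))) in H.
  2:{ intros y. unfold w, x. rewrite inner_sub_l, <- exp_plus. f_equal. ring. }
  rewrite (lsum_ext ys (fun y => w y * exp (0 * x y)) w) in H
    by (intros; rewrite Rmult_0_l, exp_0; ring).
  rewrite (lsum_ext ys (fun y => w y * x y * exp (0 * x y))
                       (fun y => -1 * (w y * inner n delta (phi y)))) in H
    by (intros; rewrite Rmult_0_l, exp_0; unfold x; ring).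
  rewrite lsum_scal in H.
  rewrite inner_marg. unfold log_partition. unfold w in H. unfold Rdiv in *. lra.
Qed.

Lemma surrogate_excess_lower v q t : is_prob ys q -> 0 <= t ->
  t * norm2 n (moment_gap v q) ^ 2
  - c_phi ys n phi ^ 2 * norm2 n (moment_gap v q) ^ 2 * t ^ 2 / 2
  <= delta_s ys n phi v q.
Proof.
  intros Hq Ht. set (delta := moment_gap v q).
  eapply Rle_trans; [|apply (delta_s_ge_decrease v (fun i => v i - t * delta i) q Hq)].
  rewrite !ssur_log_partition by auto.
  pose proof (log_partition_descent v delta t Ht) as Hdesc.
  assert (Hgap : norm2 n delta ^ 2
                 = inner n delta (marg ys n phi v) - inner n delta (mu ys phi q))
    by (rewrite norm2_sq, <- inner_sub_r; reflexivity).
  rewrite Rpow_mult_distr in Hdesc.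
  rewrite inner_sub_l, Hgap at 1. lra.
Qed.

Lemma loss_excess_upper (d : vec -> Z) v q :
  (forall z : Z, In z zs) -> zs <> nil -> is_decoding ys zs n psi phi d -> is_prob ys q ->
  delta_ell ys zs n psi phi c (d v) q <= 2 * c_psi zs n psi * norm2 n (moment_gap v q).
Proof.
  intros Hzs Hzsne Hd Hq. set (delta := moment_gap v q).
  destruct (lmin_attained zs (fun z' => ell ys n psi phi c z' q) Hzsne) as [z0 [_ Hz0]].
  unfold delta_ell. rewrite Hz0, !ell_affine by auto.
  assert (Hmu : forall u, inner n u (mu ys phi q) = inner n u (marg ys n phi v) - inner n u delta)
    by (intros u; unfold delta, moment_gap; rewrite inner_sub_r; ring).
  rewrite !Hmu.
  pose proof (proj2 (Hd v) z0 (Hzs z0)) as Hmin.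
  pose proof (inner_lmax_bound zs n psi delta (d v) (Hzs _)) as Hdv.
  pose proof (inner_lmax_bound zs n psi delta z0 (Hzs _)) as Hz.
  apply Rabs_le_between in Hdv. apply Rabs_le_between in Hz.
  unfold c_psi. lra.
Qed.

End CRF.

(* Step 3: if e <= 2 a N and the excess surrogate dominates the quadratic
   t N^2 - b^2 N^2 t^2 / 2 for every t >= 0, then it dominates
   e^2 / (8 a^2 b^2) (choose t = 1/b^2). *)
Lemma calibration_from_bounds a b N e s :
  0 <= e -> e <= 2 * a * N ->
  (forall t, 0 <= t -> t * N ^ 2 - b ^ 2 * N ^ 2 * t ^ 2 / 2 <= s) ->
  e ^ 2 / (8 * a ^ 2 * b ^ 2) <= s.
Proof.
  intros He HeN Hs.
  assert (Hs0 : 0 <= s) by (specialize (Hs 0 (Rle_refl 0)); lra).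
  destruct (Req_dec (8 * a ^ 2 * b ^ 2) 0) as [Hden|Hden].
  { unfold Rdiv. rewrite Hden, Rinv_0, Rmult_0_r. exact Hs0. }
  assert (Hb0 : b <> 0) by (intros ->; apply Hden; ring).
  assert (Ha0 : a <> 0) by (intros ->; apply Hden; ring).
  assert (Hb : 0 < b ^ 2) by (apply pow2_gt_0; exact Hb0).
  assert (Hopt : N ^ 2 / (2 * b ^ 2) <= s).
  { specialize (Hs (/ b ^ 2) (Rlt_le _ _ (Rinv_0_lt_compat _ Hb))).
    replace (/ b ^ 2 * N ^ 2 - b ^ 2 * N ^ 2 * (/ b ^ 2) ^ 2 / 2)
      with (N ^ 2 / (2 * b ^ 2)) in Hs by (field; auto).
    exact Hs. }
  assert (He2 : e ^ 2 <= 4 * a ^ 2 * N ^ 2).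
  { replace (4 * a ^ 2 * N ^ 2) with ((2 * a * N) ^ 2) by ring.
    apply pow_incr; lra. }
  eapply Rle_trans; [|exact Hopt].
  replace (N ^ 2 / (2 * b ^ 2)) with (4 * a ^ 2 * N ^ 2 / (8 * a ^ 2 * b ^ 2)) by (field; auto).
  apply Rmult_le_compat_r; [left; apply Rinv_0_lt_compat; nra|exact He2].
Qed.

Theorem proposition5p2
  (Y Z : Type) (ys : list Y) (zs : list Z)
  (Hys : forall y : Y, In y ys) (Hysnd : NoDup ys) (Hysne : ys <> nil)
  (Hzs : forall z : Z, In z zs) (Hzsnd : NoDup zs) (Hzsne : zs <> nil)
  (n : nat) (psi : Z -> vec) (phi : Y -> vec) (c : R)
  (d : vec -> Z) (Hd : is_decoding ys zs n psi phi d)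
  (eps : R) (Heps : 0 <= eps) :
  zeta_ge ys zs n psi phi c d eps
    (eps ^ 2 / (8 * (c_psi zs n psi) ^ 2 * (c_phi ys n phi) ^ 2)).
Proof.
  intros r [v [q [Hq [Hloss ->]]]].
  apply (calibration_from_bounds _ _ (norm2 n (moment_gap ys n phi v q)) eps); auto.
  - apply Rle_trans with (delta_ell ys zs n psi phi c (d v) q); [lra|].
    apply loss_excess_upper; auto.
  - intros t Ht. apply surrogate_excess_lower; auto.
Qed.
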